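(* Let $q$ be a prime such that the multiplicative order of $2$ in $(\mathbb{Z}/q\mathbb{Z})^\times$ is congruent to $2 \pmod 4$. Let $n \geq 1$ be an integer, $v = 3q^n$, and $k$ an odd positive integer. Then there are no integers $a_1, \ldots, a_k$ with $1 \leq a_j < v$ such that $\prod_{j=1}^k a_j = \prod_{j=1}^k (v - a_j)$. *)

From mathcomp Require Import all_boot all_order all_algebra.
Set Implicit Arguments. Unset Strict Implicit. Unset Printing Implicit Defensive.

Definition mult_order (a q m : nat) : Prop :=
  0 < m /\ a ^ m = 1 %[mod q] /\
  (forall j, 0 < j < m -> a ^ j <> 1 %[mod q]).

From mathcomp Require Import all_boot all_order all_algebra.
From mathcomp Require Import zify.
Import Order.TTheory GRing.Theory Num.Theory.

Set Implicit Arguments.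
Unset Strict Implicit.
Unset Printing Implicit Defensive.

(* Write the q'-part of x (its largest divisor prime to q) as x' and let m be
   the odd half of the order of 2 mod q, so that 2^m = -1 in F_q.  If
   A + B = 3 q^n, then A and B carry the same power of q, and either
   A' + B' = 0 mod q or {A', B'} = {1, 2}; in both cases B'^m = -A'^m in F_q.
   Hence prod A_j = prod B_j with k odd gives X = (-1)^k X for the nonzero
   X = prod A_j'^m, i.e. 2 X = 0, impossible as q is odd. *)

Lemma partn_prod (I : finType) (F : I -> nat) pi :
  (forall i, 0 < F i) -> (\prod_i F i)`_pi = \prod_i (F i)`_pi.
Proof.
move=> F_gt0; suff: 0 < \prod_i F i /\ (\prod_i F i)`_pi = \prod_i (F i)`_pi.
  by case.
elim/big_rec2: _ => [|i x y _ [x_gt0 <-]]; first by rewrite partn1.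
by rewrite muln_gt0 F_gt0 x_gt0 partnM.
Qed.

Lemma partn_p'_pfactorM q c e :
  prime q -> ~~ (q %| c) -> (c * q ^ e)`_q^' = c.
Proof.
move=> q_pr q_nc; have c_gt0 : (0 < c)%N by case: c q_nc; rewrite ?dvdn0.
rewrite partnM ?expn_gt0 ?(prime_gt0 q_pr) // part_pnat_id ?p'natE //.
by rewrite part_p'nat ?muln1 // pnatNK pnatX pnat_id.
Qed.

Lemma logn_lt_pexp q A n : 1 < q -> 0 < A -> A < q ^ n -> logn q A < n.
Proof.
move=> q_gt1 A_gt0 lt_A_qn; rewrite -(ltn_exp2l _ _ q_gt1).
exact: leq_ltn_trans (dvdn_leq A_gt0 (pfactor_dvdnn q A)) lt_A_qn.
Qed.

Section PrimeField.

Local Open Scope ring_scope.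

Variable q : nat.
Hypothesis q_pr : prime q.

Lemma Fp_natr_eq x y : (x%:R : 'F_q) = y%:R <-> (x = y %[mod q])%N.
Proof.
split=> [E | E]; first by rewrite -!(val_Fp_nat q_pr) E.
by apply: val_inj; rewrite /= !(val_Fp_nat q_pr).
Qed.

Lemma Fp_natr_eq0 x : ((x%:R : 'F_q) == 0) = (q %| x)%N.
Proof. by rewrite (dvdn_pcharf (pchar_Fp q_pr)). Qed.

Lemma mult_order_half_exp a m :
  mult_order a q (2 * m) -> (a%:R : 'F_q) ^+ m = -1.
Proof.
move=> [m2_gt0 [a_2m a_min]].
have a_m_neq1 : (a ^ m)%:R != 1 :> 'F_q.
  apply/eqP => /(Fp_natr_eq _ 1); apply: a_min; lia.
have a_m_sq : (a ^ m)%:R * (a ^ m)%:R = 1 :> 'F_q.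
  by rewrite -natrM -expnD addnn -mul2n; apply/(Fp_natr_eq _ 1).
have : ((a ^ m)%:R - 1) * ((a ^ m)%:R + 1) = 0 :> 'F_q.
  by rewrite mulrDr mulr1 mulrBl a_m_sq mul1r addrA subrK subrr.
by move/eqP; rewrite mulf_eq0 subr_eq0 (negbTE a_m_neq1) addr_eq0 natrX => /eqP.
Qed.

Definition Fp_p'part (x : nat) : 'F_q := (x`_q^')%N%:R.

Lemma Fp_p'part_neq0 x : Fp_p'part x != 0.
Proof. by rewrite Fp_natr_eq0 -p'natE ?part_pnat. Qed.

Lemma Fp_p'part_prod (I : finType) (F : I -> nat) :
  (forall i, (0 < F i)%N) -> Fp_p'part (\prod_i F i) = \prod_i Fp_p'part (F i).
Proof. by move=> F_gt0; rewrite /Fp_p'part partn_prod // natr_prod. Qed.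

Variable m : nat.
Hypotheses (m_odd : odd m) (two_exp_m : (2%:R : 'F_q) ^+ m = -1).

Lemma exp2_eqN1_prime_gt2 : (2 < q)%N.
Proof.
have two_neq0 : (2%:R : 'F_q) != 0.
  apply: contra_eq_neq two_exp_m => ->.
  by rewrite expr0n; case: (m) m_odd => //= _ _; rewrite eq_sym oppr_eq0 oner_eq0.
rewrite ltn_neqAle prime_gt1 // andbT; apply/eqP => two_q.
by move: two_neq0; rewrite Fp_natr_eq0 -two_q dvdnn.
Qed.

Lemma Fp_p'part_complement A B n :
  (0 < A)%N -> (0 < B)%N -> (A + B = 3 * q ^ n)%N ->
  Fp_p'part B ^+ m = - Fp_p'part A ^+ m.
Proof.
move=> A_gt0 B_gt0 sumAB; have q_gt2 := exp2_eqN1_prime_gt2.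
have [a q_co_a defA] := pfactor_coprime q_pr A_gt0; set e := logn q A in defA.
have q_na : ~~ (q %| a)%N by rewrite -prime_coprime.
have e_le_n : (e <= n)%N.
  by rewrite -ltnS; apply: logn_lt_pexp (prime_gt1 q_pr) A_gt0 _; rewrite expnS; nia.
have defB : B = ((3 * q ^ (n - e) - a) * q ^ e)%N.
  by rewrite mulnBl -mulnA -expnD subnK // -defA -sumAB addKn.
set b := (3 * q ^ (n - e) - a)%N in defB.
suff [q_nb b_m] : ~~ (q %| b)%N /\ (b%:R : 'F_q) ^+ m = - (a%:R ^+ m).
  by rewrite /Fp_p'part defA defB !partn_p'_pfactorM.
have b_gt0 : (0 < b)%N by move: B_gt0; rewrite defB muln_gt0 => /andP[].
have [lt_en | eq_en] : (e < n)%N \/ e = n by lia.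
  have b_Fp : (b%:R : 'F_q) = - a%:R.
    apply/eqP; rewrite -addr_eq0 -natrD Fp_natr_eq0.
    have le_a : (a <= 3 * q ^ (n - e))%N by apply: ltnW; rewrite -subn_gt0.
    rewrite /b subnK //; apply: dvdn_mull; apply: dvdn_exp => //.
    by rewrite subn_gt0.
  rewrite -Fp_natr_eq0 b_Fp oppr_eq0 Fp_natr_eq0.
  by rewrite exprNn -signr_odd m_odd mulN1r.
have b_eq : b = (3 - a)%N by rewrite /b eq_en subnn expn0 muln1.
rewrite b_eq; rewrite b_eq in b_gt0.
have [-> | ->] : a = 1%N \/ a = 2%N by lia.
  rewrite two_exp_m expr1n.
  by split=> //; apply/negP => /dvdn_leq; lia.
rewrite two_exp_m expr1n opprK.
by split=> //; apply/negP => /dvdn_leq; lia.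
Qed.

Lemma no_balanced_products k n (A B : 'I_k -> nat) :
  odd k -> (forall j, 0 < A j)%N -> (forall j, 0 < B j)%N ->
  (forall j, A j + B j = 3 * q ^ n)%N -> (\prod_j A j <> \prod_j B j)%N.
Proof.
move=> k_odd A_gt0 B_gt0 sumAB eq_prod.
pose X := \prod_j Fp_p'part (A j) ^+ m.
have X_neq0 : X != 0 by apply/prodf_neq0 => j _; rewrite expf_neq0 ?Fp_p'part_neq0.
have X_eqN : X = - X.
  have := congr1 (fun x => Fp_p'part x ^+ m) eq_prod.
  rewrite !Fp_p'part_prod // -!prodrXl -/X => {1}->.
  under eq_bigr => j _ do rewrite (Fp_p'part_complement (A_gt0 j) (B_gt0 j) (sumAB j)).
  by rewrite prodrN card_ord -signr_odd k_odd mulN1r.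
have : 2%:R * X = 0 by rewrite mulr2n mulrDl mul1r {2}X_eqN subrr.
apply/eqP; rewrite mulf_eq0 negb_or X_neq0 andbT Fp_natr_eq0.
by apply/negP => /dvdn_leq; have := exp2_eqN1_prime_gt2; lia.
Qed.

End PrimeField.

Theorem corollary4p12 (q n k : nat) (ord2 : nat) :
  prime q -> mult_order 2 q ord2 -> ord2 %% 4 = 2 ->
  1 <= n -> odd k ->
  let v : int := Posz (3 * q ^ n) in
  ~ (exists a : 'I_k -> int,
       (forall j, 1 <= a j < v)%R /\
       (\prod_(j < k) a j = \prod_(j < k) (v - a j))%R).
Proof.
move=> q_pr ord2_q ord2_mod4 _ k_odd v [a [a_bounds eq_prod]].
have [m m_odd two_exp_m] : exists2 m, odd m & ((2%:R : 'F_q) ^+ m = -1)%R.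
  exists (2 * (ord2 %/ 4)).+1; first by rewrite /= mul2n odd_double.
  apply: (mult_order_half_exp q_pr).
  by have -> : 2 * (2 * (ord2 %/ 4)).+1 = ord2 by lia.
pose A j := `|a j|%N; pose B j := `|v - a j|%N.
have [eA eB] : (forall j, Posz (A j) = a j) /\ (forall j, Posz (B j) = (v - a j)%R).
  by split=> j; rewrite gez0_abs //; case/andP: (a_bounds j) => a_ge1 a_ltv;
    rewrite ?subr_ge0 ?ltW // (le_trans _ a_ge1).
apply: (no_balanced_products q_pr m_odd two_exp_m (n := n) (A := A) (B := B) k_odd).
- by move=> j; rewrite -ltz_nat eA; case/andP: (a_bounds j).
- by move=> j; rewrite -ltz_nat eB subr_gt0; case/andP: (a_bounds j).
- by move=> j; apply/eqP; rewrite -eqz_nat PoszD eA eB addrC subrK.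
- have := congr1 absz eq_prod.
  by rewrite !(@big_morph nat int absz 1%N muln 1%R *%R abszM erefl).
Qed.
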